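(* Let $q\in\mathbb{C}$ with $|q|<1$, let $n$ be a positive integer and $m\ge0$ an integer. Then for every $x\in[0,1]$, $$[n]_q^m\,\mathbb{B}_{n,q}(x^m\mid x)=\sum_{k=0}^n\binom{n}{k}_q x^k\,[k]_q!\,q^{\binom{k}{2}}S(m,k:q).$$
   Context: For a number $x$, $[x]_q=\frac{1-q^x}{1-q}$; $[n]_q!=[n]_q\cdots[1]_q$, $[0]_q!=1$; $\binom{n}{k}_q=\frac{[n]_q!}{[k]_q![n-k]_q!}$ for $0\le k\le n$ and $0$ for $k>n$; $\binom{j}{2}=j(j-1)/2$. $(1-b)_q^n=\prod_{i=1}^n(1-bq^{i-1})$. For integers $k,n\ge0$, $B_{k,n}(x,q)=\binom{n}{k}_q x^k(1-x)_q^{n-k}$ if $n\ge k$ and $0$ otherwise. For $f\in C[0,1]$, $\mathbb{B}_{n,q}(f\mid x)=\sum_{k=0}^n B_{k,n}(x,q)f\!\left(\frac{[k]_q}{[n]_q}\right)$; here $f(t)=t^m$. The $q$-Stirling numbers of the second kind $S(m,k:q)$ are defined by $\frac{q^{-\binom{k}{2}}}{[k]_q!}\sum_{j=0}^k(-1)^{k-j}\binom{k}{j}_q q^{\binom{k-j}{2}}e^{[j]_q t}=\sum_{m=0}^\infty S(m,k:q)\frac{t^m}{m!}$, i.e. $S(m,k:q)=\frac{q^{-\binom{k}{2}}}{[k]_q!}\sum_{j=0}^k(-1)^{k-j}q^{\binom{k-j}{2}}\binom{k}{j}_q[j]_q^m$ (with $[0]_q^0=1$). *)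

From HB Require Import structures.
From mathcomp Require Import all_boot all_order all_algebra.
From mathcomp Require Import reals.
From mathcomp Require Import complex.
Set Implicit Arguments. Unset Strict Implicit. Unset Printing Implicit Defensive.
Import Order.TTheory GRing.Theory Num.Theory.
Local Open Scope ring_scope.

Section QDefs.
Variable F : fieldType.
Implicit Types (q x : F) (n k m : nat).

Definition qnum q k : F := (1 - q ^+ k) / (1 - q).

Definition qfact q n : F := \prod_(1 <= i < n.+1) qnum q i.

Definition qbinom q n k : F :=
  if (k <= n)%N then qfact q n / (qfact q k * qfact q (n - k)) else 0.

(* (1 - b)_q^n = prod_{i=1}^n (1 - b q^(i-1)) *)
Definition qpoch b q n : F := \prod_(0 <= i < n) (1 - b * q ^+ i).

Definition qbern k n x q : F :=
  if (k <= n)%N then qbinom q n k * x ^+ k * qpoch x q (n - k) else 0.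

Definition qBernstein n q (f : F -> F) x : F :=
  \sum_(0 <= k < n.+1) qbern k n x q * f (qnum q k / qnum q n).

Definition qStirling2 m k q : F :=
  (q ^+ 'C(k, 2))^-1 / qfact q k *
  \sum_(0 <= j < k.+1)
     (-1) ^+ (k - j) * q ^+ 'C(k - j, 2) * qbinom q k j * qnum q j ^+ m.

End QDefs.

(** Both sides are polynomials in x; the identity holds over any field as soon
    as q is not a root of unity, which is all that |q| < 1 is used for.
    Multiplying B_{k,n} by [n]_q^m clears the denominators of f([k]_q/[n]_q),
    so the left side is the sum of qbinom n k x^k (1 - x)_q^(n-k) [k]_q^m.
    On the right, the explicit formula for S(m,k:q) gives a double sum over
    j <= k <= n; exchanging the sums and using
    qbinom n k qbinom k j = qbinom n j qbinom (n-j) (k-j), the sum over k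
    collapses by the q-binomial theorem
    (1 - x)_q^N = sum_i qbinom N i (-1)^i q^C(i,2) x^i
    to qbinom n j x^j (1 - x)_q^(n-j). *)
From HB Require Import structures.
From mathcomp Require Import all_boot all_order all_algebra.
From mathcomp Require Import reals.
From mathcomp Require Import complex.
From mathcomp Require Import ring zify.
Set Implicit Arguments.
Unset Strict Implicit.
Unset Printing Implicit Defensive.
Import Order.TTheory GRing.Theory Num.Theory.
Local Open Scope ring_scope.

Section QCalculus.
Variable F : fieldType.
Implicit Types (q x : F) (n k m : nat).

Lemma qfact0 q : qfact q 0 = 1.
Proof. by rewrite /qfact big_geq. Qed.

Lemma qfactS q n : qfact q n.+1 = qfact q n * qnum q n.+1.
Proof. by rewrite /qfact big_nat_recr. Qed.

Lemma qbinom_gt q n k : (n < k)%N -> qbinom q n k = 0.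
Proof. by rewrite /qbinom ltnNge => /negbTE ->. Qed.

Lemma qnum0q k : (0 < k)%N -> qnum (0 : F) k = 1.
Proof. by move=> k_gt0; rewrite /qnum expr0n eqn0Ngt k_gt0 /= !subr0 divr1. Qed.

Lemma qfact0q n : qfact (0 : F) n = 1.
Proof.
rewrite /qfact big1_seq // => i /andP[_].
by rewrite mem_index_iota => /andP[i_gt0 _]; apply: qnum0q.
Qed.

Variable q : F.
Hypothesis q_not_root1 : forall k, (0 < k)%N -> q ^+ k != 1.

Lemma subr1q_neq0 : 1 - q != 0.
Proof. by rewrite subr_eq0 eq_sym -(expr1 q) q_not_root1. Qed.

Lemma qnum_neq0 k : (0 < k)%N -> qnum q k != 0.
Proof.
move=> k_gt0; rewrite /qnum mulf_neq0 ?invr_eq0 ?subr1q_neq0 //.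
by rewrite subr_eq0 eq_sym q_not_root1.
Qed.

Lemma qfact_neq0 n : qfact q n != 0.
Proof.
elim: n => [|n IHn]; first by rewrite qfact0 oner_eq0.
by rewrite qfactS mulf_neq0 // qnum_neq0.
Qed.

Lemma qbinomn0 n : qbinom q n 0 = 1.
Proof. by rewrite /qbinom /= subn0 qfact0 mul1r divff // qfact_neq0. Qed.

Lemma qbinomnn n : qbinom q n n = 1.
Proof. by rewrite /qbinom leqnn subnn qfact0 mulr1 divff // qfact_neq0. Qed.

(* The q-Pascal rule in the form suited to (1 - x)_q^(n+1) = (1 - x)_q^n (1 - x q^n). *)
Lemma qbinomS n k :
  qbinom q n.+1 k.+1 = qbinom q n k.+1 + q ^+ (n - k) * qbinom q n k.
Proof.
have [k_lt_n | n_lt_k | ->] := ltngtP k n; last first.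
- by rewrite subnn expr0 mul1r !qbinomnn qbinom_gt ?add0r.
- by rewrite !qbinom_gt ?mulr0 ?addr0 ?ltnS // ltnW.
have [d ->] : exists d, n = (k + d.+1)%N.
  by exists (n - k.+1)%N; rewrite addnS -addSn subnKC.
rewrite /qbinom !ltnS leq_addr addnS ltnS leq_addr.
have -> : ((k + d).+2 - k.+1 = d.+1)%N by lia.
have -> : ((k + d).+1 - k = d.+1)%N by lia.
have -> : ((k + d).+1 - k.+1 = d)%N by lia.
rewrite (qfactS q (k + d).+1) (qfactS q k) (qfactS q d).
have qk := @qnum_neq0 k.+1 isT; have qd := @qnum_neq0 d.+1 isT.
have fn := qfact_neq0 (k + d).+1; have fk := qfact_neq0 k.
have fd := qfact_neq0 d; have q1 := subr1q_neq0.
have expq : q ^+ (k + d).+2 = q ^+ k.+1 * q ^+ d.+1 by rewrite -exprD addSn addnS.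
move: qk qd; rewrite /qnum expq !mulf_eq0 !negb_or => /andP[qk _] /andP[qd _].
move: (qfact q (k + d).+1) (qfact q k) (qfact q d) fn fk fd => A B C fn fk fd.
by field; rewrite q1 qd fd fk qk.
Qed.

Lemma qpoch_qbinom x n : qpoch x q n =
  \sum_(0 <= i < n.+1) qbinom q n i * ((-1) ^+ i * q ^+ 'C(i, 2) * x ^+ i).
Proof.
elim: n => [|n IHn].
  by rewrite /qpoch big_geq // big_nat1 qbinomn0 !expr0 !mulr1.
rewrite /qpoch big_nat_recr //= -/(qpoch x q n) IHn [RHS]big_nat_recl // qbinomn0.
under [X in _ = _ + X]eq_big_nat => i _ do rewrite qbinomS mulrDl.
rewrite big_split /= addrA.
set S := (\sum_(0 <= i < n.+1) qbinom q n i * _).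
have shift : 1 * ((-1) ^+ 0 * q ^+ 'C(0, 2) * x ^+ 0) +
    \sum_(0 <= i < n.+1) qbinom q n i.+1 * ((-1) ^+ i.+1 * q ^+ 'C(i.+1, 2) * x ^+ i.+1)
    = S.
  rewrite /S [in RHS]big_nat_recl // qbinomn0 [in LHS]big_nat_recr //=.
  by rewrite qbinom_gt // mul0r addr0.
have lower : \sum_(0 <= i < n.+1) q ^+ (n - i) * qbinom q n i *
      ((-1) ^+ i.+1 * q ^+ 'C(i.+1, 2) * x ^+ i.+1) = - (x * q ^+ n) * S.
  rewrite /S big_distrr; apply: eq_big_nat => i /andP[_]; rewrite ltnS => i_le_n.
  have -> : q ^+ n = q ^+ (n - i) * q ^+ i by rewrite -exprD subnK.
  rewrite /= binS bin1 exprD !exprS; ring.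
by rewrite shift lower; ring.
Qed.

Lemma qbinom_mul n k j : (j <= k)%N -> (k <= n)%N ->
  qbinom q n k * qbinom q k j = qbinom q n j * qbinom q (n - j) (k - j).
Proof.
move=> j_le_k k_le_n.
have [a ek] : exists a, k = (j + a)%N by exists (k - j)%N; rewrite subnKC.
have [b en] : exists b, n = (j + a + b)%N by exists (n - k)%N; rewrite -ek subnKC.
subst k n.
rewrite /qbinom.
have -> : (j + a + b - (j + a) = b)%N by lia.
have -> : (j + a - j = a)%N by lia.
have -> : (j + a + b - j = a + b)%N by lia.
have -> : (a + b - a = b)%N by lia.
rewrite k_le_n j_le_k leq_addr (_ : (j <= j + a + b)%N); last by lia.
have f1 := qfact_neq0 (j + a); have f2 := qfact_neq0 j.
have f3 := qfact_neq0 a; have f4 := qfact_neq0 b; have f5 := qfact_neq0 (a + b).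
by field; rewrite f1 f2 f3 f4 f5.
Qed.

(* For q = 0 the factor q^C(k,2) vanishes and S(m,k:0) is a junk value, so
   the alternating sum must vanish too: only j = k - 1 and j = k survive. *)
Lemma qfact_qStirling2 m k : qfact q k * q ^+ 'C(k, 2) * qStirling2 m k q =
  \sum_(0 <= j < k.+1)
     (-1) ^+ (k - j) * q ^+ 'C(k - j, 2) * qbinom q k j * qnum q j ^+ m.
Proof.
rewrite /qStirling2.
have [qC0 | qC_neq0] := eqVneq (q ^+ 'C(k, 2)) 0; last first.
  by field; rewrite qC_neq0 qfact_neq0.
rewrite qC0 mulr0 mul0r.
move/eqP: qC0; rewrite expf_eq0 => /andP[C_gt0 /eqP q0].
case: k C_gt0 => [|[|k]] // _.
rewrite q0 big_nat_recr //= big_nat_recr //= big1_seq => [|j /andP[_]]; last first.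
  rewrite mem_index_iota => /andP[_ j_lt_k].
  by rewrite expr0n (_ : 'C(k.+2 - j, 2) == 0%N = false) ?mulr0 ?mul0r //;
     apply/negbTE; rewrite -lt0n bin_gt0; lia.
rewrite subnn /qbinom leqnn ltnW // subnn.
have -> : (k.+2 - k.+1 = 1)%N by lia.
rewrite !qfact0q !qnum0q // !expr1n expr0 expr1 !mulr1 divr1; ring.
Qed.

Lemma qBernstein_monomial x n m : (0 < n)%N ->
  qnum q n ^+ m * qBernstein n q (fun t => t ^+ m) x =
  \sum_(0 <= k < n.+1) qbinom q n k * x ^+ k * qpoch x q (n - k) * qnum q k ^+ m.
Proof.
move=> n_gt0; have qn_neq0 : qnum q n ^+ m != 0 by rewrite expf_neq0 // qnum_neq0.
rewrite /qBernstein big_distrr; apply: eq_big_nat => k /andP[_]; rewrite ltnS => k_le_n.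
rewrite /qbern k_le_n /= [X in _ * (_ * X)]expr_div_n.
by move: (qnum q n ^+ m) qn_neq0 => a a_neq0; field.
Qed.

Lemma qpoch_shift x n j : (j <= n)%N ->
  \sum_(j <= k < n.+1)
     qbinom q n k * x ^+ k * ((-1) ^+ (k - j) * q ^+ 'C(k - j, 2) * qbinom q k j)
  = qbinom q n j * x ^+ j * qpoch x q (n - j).
Proof.
move=> j_le_n; rewrite -{1}(add0n j) big_addn.
have -> : (n.+1 - j = (n - j).+1)%N by lia.
rewrite qpoch_qbinom big_distrr; apply: eq_big_nat => i /andP[_]; rewrite ltnS => i_le.
have ij_le_n : (i + j <= n)%N by lia.
have := @qbinom_mul n (i + j) j (leq_addl i j) ij_le_n; rewrite addnK => mul_ij.
rewrite exprD /=.
transitivity (qbinom q n (i + j) * qbinom q (i + j) j *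
              (x ^+ i * x ^+ j * ((-1) ^+ i * q ^+ 'C(i, 2)))); first by ring.
by rewrite mul_ij; ring.
Qed.

Lemma qBernstein_monomial_qStirling2 x n m : (0 < n)%N ->
  qnum q n ^+ m * qBernstein n q (fun t => t ^+ m) x =
  \sum_(0 <= k < n.+1)
     qbinom q n k * x ^+ k * qfact q k * q ^+ 'C(k, 2) * qStirling2 m k q.
Proof.
move=> n_gt0; rewrite qBernstein_monomial //.
set t := fun k j => (-1) ^+ (k - j) * q ^+ 'C(k - j, 2) * qbinom q k j.
transitivity (\sum_(0 <= j < n.+1) \sum_(0 <= k < n.+1)
                qbinom q n k * x ^+ k * t k j * qnum q j ^+ m); last first.
  rewrite exchange_big_nat /=; apply: eq_big_nat => k /andP[_ k_le_n].
  rewrite -[RHS]mulrA -[RHS]mulrA (mulrA (qfact q k)) qfact_qStirling2 big_distrr /=.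
  rewrite (big_cat_nat _ (n := k.+1)) //=.
  rewrite [X in _ + X]big1_seq ?addr0 => [|j /andP[_]]; last first.
    rewrite mem_index_iota => /andP[k_lt_j _].
    by rewrite /t (qbinom_gt q k_lt_j) !(mulr0, mul0r).
  by apply: eq_big_nat => j _; rewrite /t; ring.
apply: eq_big_nat => j /andP[_]; rewrite ltnS => j_le_n.
rewrite [RHS](big_cat_nat _ (n := j)) //=; last exact: leqW.
rewrite big1_seq ?add0r => [|k /andP[_]]; last first.
  rewrite mem_index_iota => /andP[_ k_lt_j].
  by rewrite /t (qbinom_gt q k_lt_j) !(mulr0, mul0r).
by rewrite -big_distrl /= /t qpoch_shift.
Qed.

End QCalculus.

Lemma expr_neq1_norm_lt1 (R : numDomainType) (q : R) k :
  `|q| < 1 -> (0 < k)%N -> q ^+ k != 1.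
Proof.
move=> q_lt1 k_gt0; apply/eqP => qk1.
have := exprn_ilt1 k (normr_ge0 q) q_lt1.
by rewrite -normrX qk1 normr1 ltxx -lt0n k_gt0.
Qed.

Local Open Scope complex_scope.

Theorem corollary4 (R : realType) (q : R[i]) (n m : nat) (x : R) :
  `|q| < 1 -> (0 < n)%N -> 0 <= x <= 1 ->
  qnum q n ^+ m * qBernstein n q (fun t => t ^+ m) x%:C =
  \sum_(0 <= k < n.+1)
     qbinom q n k * x%:C ^+ k * qfact q k * q ^+ 'C(k, 2) * qStirling2 m k q.
Proof.
move=> q_lt1 n_gt0 _.
apply: qBernstein_monomial_qStirling2 n_gt0 => k k_gt0.
exact: (@expr_neq1_norm_lt1 R[i] q k q_lt1 k_gt0).
Qed.
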